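(* Let $p,q$ be relatively prime positive integers and let $P_0,P_1$ be relatively prime positive integers with $\min\{P_0,P_1\}\ge 2pq$. Then there exists a unital injective $*$-homomorphism from $I(p,q)$ into $I(P_0,P_1)$.
   Context: For relatively prime positive integers $p,q$, the dimension drop algebra $I(p,q)$ is $\{f\in C([0,1])\otimes M_{pq}: f(0)\in M_p\otimes 1_q,\ f(1)\in 1_p\otimes M_q\}$ (equivalently, functions on two copies of $[0,2\pi]$ glued at $0$, with these conditions at the two free endpoints). *)

From HB Require Import structures.
From mathcomp Require Import all_boot all_order all_algebra.
From mathcomp Require Import all_classical reals topology normedtype.
From mathcomp Require Import complex mxtens.
Set Implicit Arguments. Unset Strict Implicit. Unset Printing Implicit Defensive.
Import Order.TTheory GRing.Theory Num.Theory.
Import numFieldNormedType.Exports.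
Local Open Scope ring_scope.
Local Open Scope classical_set_scope.

Definition clamp01 (R : realType) (t : R) : R := Num.min 1 (Num.max 0 t).

Definition mx_continuous (R : realType) (n : nat) (f : R -> 'M[R[i]]_n) : Prop :=
  forall i j : 'I_n,
    continuous (fun t : R => Re (f t i j)) /\ continuous (fun t : R => Im (f t i j)).

(* Dimension drop algebra I(p,q), realized as functions R -> M_{pq}(C)
   that are the constant extension of their restriction to [0,1]
   (f t = f (clamp01 t)); these are in bijection with C([0,1], M_{pq}). *)
Definition dimdrop (R : realType) (p q : nat) : set (R -> 'M[R[i]]_(p * q)) :=
  [set f | (forall t, f t = f (clamp01 t))
         /\ mx_continuous f
         /\ (exists a : 'M[R[i]]_p, f 0 = a *t (1%:M : 'M[R[i]]_q))
         /\ (exists b : 'M[R[i]]_q, f 1 = (1%:M : 'M[R[i]]_p) *t b)].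

Arguments dimdrop {R} p q _.

Definition adjf (R : realType) (n : nat) (f : R -> 'M[R[i]]_n) : R -> 'M[R[i]]_n :=
  fun t => map_mx (@conjc R) (f t)^T.

Definition unital_inj_star_hom (R : realType) (p q P0 P1 : nat)
  (phi : (R -> 'M[R[i]]_(p * q)) -> (R -> 'M[R[i]]_(P0 * P1))) : Prop :=
  (forall f, dimdrop p q f -> dimdrop P0 P1 (phi f)) /\
      (forall f g, dimdrop p q f -> dimdrop p q g ->
         phi (fun t => f t + g t) = (fun t => phi f t + phi g t)) /\
      (forall (c : R[i]) f, dimdrop p q f ->
         phi (fun t => c *: f t) = (fun t => c *: phi f t)) /\
      (forall f g, dimdrop p q f -> dimdrop p q g ->
         phi (fun t => f t *m g t) = (fun t => phi f t *m phi g t)) /\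
      (forall f, dimdrop p q f -> phi (adjf f) = adjf (phi f)) /\
      phi (fun _ => 1%:M) = (fun _ => 1%:M) /\
    (forall f g, dimdrop p q f -> dimdrop p q g -> phi f = phi g -> f = g).

(* Write P0 = u p + v q and P1 = w q + z p with u, w >= 1, possible since both are at
   least 2 p q.  Then C^P0 (x) C^P1 splits into u w blocks C^p (x) C^q, v z blocks
   C^q (x) C^p, u z blocks C^p (x) C^p and v w blocks C^q (x) C^q.  For f in I(p,q) with
   f(0) = a (x) 1 and f(1) = 1 (x) b, let phi(f)(t) carry f(t) on the first kind of
   block, f(1 - t) conjugated by the tensor flip on the second, and a (x) 1, resp.
   b (x) 1, conjugated by a unitary path from 1 to the flip on the last two.  At t = 0
   every block is then of the form X (x) 1 and at t = 1 of the form 1 (x) Y, and these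
   assemble to X (x) 1_P1 and 1_P0 (x) Y; injectivity is read off a single block. *)

From HB Require Import structures.
From mathcomp Require Import all_boot all_order all_algebra.
From mathcomp Require Import all_classical reals topology normedtype.
From mathcomp Require Import complex mxtens trigo.
From mathcomp Require Import ring lra zify.
Set Implicit Arguments. Unset Strict Implicit. Unset Printing Implicit Defensive.
Import Order.TTheory GRing.Theory Num.Theory.
Import numFieldNormedType.Exports.
Local Open Scope ring_scope.

Lemma mulmx_sum_orth (R : pzRingType) N (I : finType) (X Y : I -> 'M[R]_N) :
  (forall i j, i != j -> X i *m Y j = 0) -> (\sum_i X i) *m (\sum_j Y j) = \sum_i X i *m Y i.
Proof.
move=> XY; rewrite mulmx_suml; apply: eq_bigr => i _.
by rewrite mulmx_sumr (bigD1 i) //= big1 ?addr0 // => j ji; apply: XY; rewrite eq_sym.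
Qed.

Section Tensor.
Variable R : pzRingType.

Lemma mxtens_index_inj m n : injective (@mxtens_index m n).
Proof. exact: can_inj (@mxtens_indexK m n). Qed.

Lemma tensmxDl m n k l (A B : 'M[R]_(m, n)) (D : 'M[R]_(k, l)) :
  (A + B) *t D = A *t D + B *t D.
Proof. by apply/matrixP=> i j; rewrite !mxE mulrDl. Qed.

Lemma tensmxDr m n k l (A : 'M[R]_(m, n)) (B D : 'M[R]_(k, l)) :
  A *t (B + D) = A *t B + A *t D.
Proof. by apply/matrixP=> i j; rewrite !mxE mulrDr. Qed.

Lemma tensmxZl m n k l c (A : 'M[R]_(m, n)) (D : 'M[R]_(k, l)) :
  (c *: A) *t D = c *: (A *t D).
Proof. by apply/matrixP=> i j; rewrite !mxE mulrA. Qed.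

Lemma tensmxDD m n k l (A B : 'M[R]_(m, n)) (A' B' : 'M[R]_(k, l)) :
  (A + B) *t (A' + B') = A *t A' + (B *t B' + (A *t B' + B *t A')).
Proof.
rewrite tensmxDl !tensmxDr -!addrA; congr (_ + _).
by rewrite [RHS]addrC -addrA.
Qed.

Lemma tensmx_suml m n k l (I : finType) (F : I -> 'M[R]_(m, n)) (D : 'M[R]_(k, l)) :
  (\sum_i F i) *t D = \sum_i (F i *t D).
Proof.
apply: (big_morph (fun A => A *t D)) => [A B|]; [exact: tensmxDl | exact: tens0mx].
Qed.

Lemma tensmx_sumr m n k l (I : finType) (D : 'M[R]_(m, n)) (F : I -> 'M[R]_(k, l)) :
  D *t (\sum_i F i) = \sum_i (D *t F i).
Proof.
apply: (big_morph (fun A => D *t A)) => [A B|]; [exact: tensmxDr | exact: tensmx0].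
Qed.

Lemma tensmx_sum m n k l (I J : finType) (F : I -> 'M[R]_(m, n)) (G : J -> 'M[R]_(k, l)) :
  (\sum_i F i) *t (\sum_j G j) = \sum_(x : I * J) (F x.1 *t G x.2).
Proof.
rewrite tensmx_suml -(pair_bigA _ (fun i j => F i *t G j)) /=.
by apply: eq_bigr => i _; rewrite tensmx_sumr.
Qed.

Lemma tensmx11 m n : (1%:M : 'M[R]_m) *t (1%:M : 'M[R]_n) = 1%:M.
Proof.
apply/matrixP=> k l.
case: (mxtens_indexP k) => i j; case: (mxtens_indexP l) => i' j'.
rewrite tensmxE !mxE -natrM (inj_eq (@mxtens_index_inj m n)) xpair_eqE.
by case: (i == i'); case: (j == j').
Qed.

(* The commutation matrix: it maps the basis vector e_i (x) e_j to e_j (x) e_i. *)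
Definition tswap m n : 'M[R]_(n * m, m * n) :=
  \matrix_(k, l) (mxtens_unindex k == ((mxtens_unindex l).2, (mxtens_unindex l).1))%:R.

Lemma tswapE m n (i : 'I_m) (j : 'I_n) l :
  tswap m n (mxtens_index (j, i)) l = (l == mxtens_index (i, j))%:R.
Proof.
case: (mxtens_indexP l) => a b.
rewrite mxE !mxtens_indexK /= (inj_eq (@mxtens_index_inj m n)) !xpair_eqE andbC.
by rewrite ![_ == a]eq_sym ![_ == b]eq_sym.
Qed.

Lemma tswap_tr m n : (tswap m n)^T = tswap n m.
Proof.
apply/matrixP=> k l; case: (mxtens_indexP k) => a b; case: (mxtens_indexP l) => j i.
rewrite [_^T _ _]mxE !tswapE !(inj_eq (@mxtens_index_inj _ _)) !xpair_eqE.
by rewrite andbC [j == _]eq_sym [i == _]eq_sym.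
Qed.

Lemma mul_tswapmx m n k (M : 'M[R]_(m * n, k)) (i : 'I_m) (j : 'I_n) l :
  (tswap m n *m M) (mxtens_index (j, i)) l = M (mxtens_index (i, j)) l.
Proof.
rewrite mxE (bigD1 (mxtens_index (i, j))) //= tswapE eqxx mul1r big1 ?addr0 //.
by move=> r /negbTE hr; rewrite tswapE hr mul0r.
Qed.

Lemma mulmx_tswapE m n k (M : 'M[R]_(k, n * m)) (i : 'I_m) (j : 'I_n) l :
  (M *m tswap m n) l (mxtens_index (i, j)) = M l (mxtens_index (j, i)).
Proof.
have tswapE' r : tswap m n r (mxtens_index (i, j)) = (r == mxtens_index (j, i))%:R.
  by rewrite -[tswap m n]tswap_tr mxE tswapE.
rewrite mxE (bigD1 (mxtens_index (j, i))) //= tswapE' eqxx mulr1 big1 ?addr0 //.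
by move=> r /negbTE hr; rewrite tswapE' hr mulr0.
Qed.

Lemma tswapK m n : tswap m n *m tswap n m = 1%:M.
Proof.
apply/matrixP=> k l; case: (mxtens_indexP k) => j i.
by rewrite mul_tswapmx tswapE !mxE eq_sym.
Qed.

End Tensor.

Arguments tswap {R} m n.

Lemma tswap_tens (R : comPzRingType) m m' n n' (X : 'M[R]_(m, m')) (Y : 'M[R]_(n, n')) :
  tswap m n *m (X *t Y) = (Y *t X) *m tswap m' n'.
Proof.
apply/matrixP=> k l; case: (mxtens_indexP k) => j i; case: (mxtens_indexP l) => a b.
by rewrite mul_tswapmx mulmx_tswapE !tensmxE mulrC.
Qed.

Section ConjugateTranspose.
Variable R : rcfType.
Local Notation C := R[i].

Definition adjmx m n (A : 'M[C]_(m, n)) : 'M[C]_(n, m) := map_mx (@conjc R) A^T.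

Lemma adjmxE m n (A : 'M[C]_(m, n)) i j : adjmx A i j = conjc (A j i).
Proof. by rewrite !mxE. Qed.

Lemma adjmxK m n (A : 'M[C]_(m, n)) : adjmx (adjmx A) = A.
Proof. by apply/matrixP=> i j; rewrite !adjmxE conjcK. Qed.

Lemma adjmxD m n (A B : 'M[C]_(m, n)) : adjmx (A + B) = adjmx A + adjmx B.
Proof. by apply/matrixP=> i j; rewrite !mxE rmorphD. Qed.

Lemma adjmxN m n (A : 'M[C]_(m, n)) : adjmx (- A) = - adjmx A.
Proof. by apply/matrixP=> i j; rewrite !mxE rmorphN. Qed.

Lemma adjmxZ m n c (A : 'M[C]_(m, n)) : adjmx (c *: A) = conjc c *: adjmx A.
Proof. by apply/matrixP=> i j; rewrite !mxE rmorphM. Qed.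

Lemma adjmx0 m n : adjmx (0 : 'M[C]_(m, n)) = 0.
Proof. by apply/matrixP=> i j; rewrite !mxE conjc0. Qed.

Lemma adjmx_sum m n (I : finType) (F : I -> 'M[C]_(m, n)) :
  adjmx (\sum_i F i) = \sum_i adjmx (F i).
Proof. exact: (big_morph _ (@adjmxD m n) (@adjmx0 m n)). Qed.

Lemma adjmxM m n k (A : 'M[C]_(m, n)) (B : 'M[C]_(n, k)) :
  adjmx (A *m B) = adjmx B *m adjmx A.
Proof. by rewrite /adjmx trmx_mul map_mxM. Qed.

Lemma adjmx1 n : adjmx (1%:M : 'M[C]_n) = 1%:M.
Proof. by apply/matrixP=> i j; rewrite !mxE conjc_nat eq_sym. Qed.

Lemma adjmx_tens m n k l (A : 'M[C]_(m, n)) (B : 'M[C]_(k, l)) :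
  adjmx (A *t B) = adjmx A *t adjmx B.
Proof. by rewrite /adjmx trmx_tens map_mxT. Qed.

Lemma adjmx_tswap m n : adjmx (tswap m n : 'M[C]_(n * m, m * n)) = tswap n m.
Proof.
by rewrite -tswap_tr; apply/matrixP=> i j; rewrite !mxE conjc_nat.
Qed.

Lemma orthogonal_mxC m n k (A : 'M[C]_(m, n)) (B : 'M[C]_(m, k)) :
  adjmx A *m B = 0 -> adjmx B *m A = 0.
Proof. by move=> h; rewrite -[A]adjmxK -adjmxM h adjmx0. Qed.

End ConjugateTranspose.

Lemma adjfE (R : realType) n (f : R -> 'M[R[i]]_n) t : adjf f t = adjmx (f t).
Proof. by []. Qed.

Section Isometries.
Variable R : rcfType.
Local Notation C := R[i].

Definition Ad N n (E : 'M[C]_(N, n)) (X : 'M[C]_n) : 'M[C]_N := E *m X *m adjmx E.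

Lemma AdD N n (E : 'M[C]_(N, n)) X Y : Ad E (X + Y) = Ad E X + Ad E Y.
Proof. by rewrite /Ad mulmxDr mulmxDl. Qed.

Lemma AdZ N n (E : 'M[C]_(N, n)) c X : Ad E (c *: X) = c *: Ad E X.
Proof. by rewrite /Ad -scalemxAr -scalemxAl. Qed.

Lemma Ad_adj N n (E : 'M[C]_(N, n)) X : adjmx (Ad E X) = Ad E (adjmx X).
Proof. by rewrite /Ad !adjmxM adjmxK mulmxA. Qed.

Lemma Ad1 N n (E : 'M[C]_(N, n)) : Ad E 1%:M = E *m adjmx E.
Proof. by rewrite /Ad mulmx1. Qed.

Lemma AdM N n (E : 'M[C]_(N, n)) X Y : adjmx E *m E = 1%:M ->
  Ad E X *m Ad E Y = Ad E (X *m Y).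
Proof.
by move=> isoE; rewrite /Ad !mulmxA -[_ *m adjmx E *m E]mulmxA isoE mulmx1 -!mulmxA.
Qed.

Lemma Ad_tens m m' n n' (A : 'M[C]_(m, n)) (B : 'M[C]_(m', n')) X Y :
  Ad (A *t B) (X *t Y) = Ad A X *t Ad B Y.
Proof. by rewrite /Ad adjmx_tens !tensmx_mul. Qed.

Lemma Ad_tswap m n (X : 'M[C]_m) (Y : 'M[C]_n) : Ad (tswap m n) (X *t Y) = Y *t X.
Proof. by rewrite /Ad tswap_tens adjmx_tswap -mulmxA tswapK mulmx1. Qed.

Definition isometry_family N n (K : finType) (E : K -> 'M[C]_(N, n)) :=
  forall k l, adjmx (E k) *m E l = if k == l then 1%:M else 0.

Definition orthogonal_families N n n' (K K' : finType)
    (E : K -> 'M[C]_(N, n)) (F : K' -> 'M[C]_(N, n')) :=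
  forall k l, adjmx (E k) *m F l = 0.

Definition AdSum N n (K : finType) (E : K -> 'M[C]_(N, n)) X := \sum_k Ad (E k) X.

Section Families.
Variables (N n n' : nat) (K K' : finType).
Variables (E : K -> 'M[C]_(N, n)) (F : K' -> 'M[C]_(N, n')).

Lemma AdSumD X Y : AdSum E (X + Y) = AdSum E X + AdSum E Y.
Proof. by rewrite /AdSum -big_split; apply: eq_bigr => k _; rewrite AdD. Qed.

Lemma AdSumZ c X : AdSum E (c *: X) = c *: AdSum E X.
Proof. by rewrite /AdSum scaler_sumr; apply: eq_bigr => k _; rewrite AdZ. Qed.

Lemma AdSum_adj X : adjmx (AdSum E X) = AdSum E (adjmx X).
Proof. by rewrite /AdSum adjmx_sum; apply: eq_bigr => k _; rewrite Ad_adj. Qed.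

Lemma AdSumM X Y : isometry_family E -> AdSum E X *m AdSum E Y = AdSum E (X *m Y).
Proof.
move=> isoE; rewrite /AdSum mulmx_suml; apply: eq_bigr => k _.
rewrite mulmx_sumr (bigD1 k) //= big1 ?addr0; first by rewrite AdM // isoE eqxx.
move=> l /negbTE kl; rewrite /Ad !mulmxA -[_ *m adjmx (E k) *m E l]mulmxA.
by rewrite isoE eq_sym kl mulmx0 !mul0mx.
Qed.

Lemma AdSum_orthM X Y : orthogonal_families E F -> AdSum E X *m AdSum F Y = 0.
Proof.
move=> oEF; rewrite /AdSum mulmx_suml big1 // => k _; rewrite mulmx_sumr big1 // => l _.
by rewrite /Ad !mulmxA -[_ *m adjmx (E k) *m F l]mulmxA oEF mulmx0 !mul0mx.
Qed.

Lemma orthogonal_familiesC : orthogonal_families E F -> orthogonal_families F E.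
Proof. by move=> oEF l k; apply: orthogonal_mxC. Qed.

Lemma AdSum_compress k X : isometry_family E -> adjmx (E k) *m AdSum E X *m E k = X.
Proof.
move=> isoE; rewrite /AdSum mulmx_sumr mulmx_suml (bigD1 k) //= big1 ?addr0.
  by rewrite /Ad !mulmxA isoE eqxx mul1mx -mulmxA isoE eqxx mulmx1.
by move=> l /negbTE kl; rewrite /Ad !mulmxA isoE eq_sym kl !mul0mx.
Qed.

Lemma AdSum_compress_orth k Y : orthogonal_families E F ->
  adjmx (E k) *m AdSum F Y *m E k = 0.
Proof.
move=> oEF; rewrite /AdSum mulmx_sumr mulmx_suml big1 // => l _.
by rewrite /Ad !mulmxA oEF !mul0mx.
Qed.

End Families.

Definition tensfam m n m' n' (I J : finType)
    (A : I -> 'M[C]_(m, n)) (B : J -> 'M[C]_(m', n')) (k : I * J) :=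
  A k.1 *t B k.2.

Section TensorFamilies.
Variables (m n m' n' : nat) (I J : finType).
Variables (A : I -> 'M[C]_(m, n)) (B : J -> 'M[C]_(m', n')).

Lemma isometry_family_tens :
  isometry_family A -> isometry_family B -> isometry_family (tensfam A B).
Proof.
move=> isoA isoB [a b] [a' b']; rewrite adjmx_tens tensmx_mul isoA isoB xpair_eqE.
by case: (a == a'); case: (b == b'); rewrite ?tensmx11 ?tens0mx ?tensmx0.
Qed.

Lemma orthogonal_families_tens k k' (I' J' : finType)
    (A' : I' -> 'M[C]_(m, k)) (B' : J' -> 'M[C]_(m', k')) :
  orthogonal_families A A' \/ orthogonal_families B B' ->
  orthogonal_families (tensfam A B) (tensfam A' B').
Proof.
by case=> oAB x y; rewrite adjmx_tens tensmx_mul oAB ?tens0mx ?tensmx0.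
Qed.

Lemma AdSum_tens X Y : AdSum (tensfam A B) (X *t Y) = AdSum A X *t AdSum B Y.
Proof. by rewrite /AdSum tensmx_sum; apply: eq_bigr => k _; rewrite Ad_tens. Qed.

End TensorFamilies.

Definition embmx N n off : 'M[C]_(N, n) := \matrix_(r, x) ((r : nat) == off + x)%N%:R.

Definition embfam N n off u : 'I_u -> 'M[C]_(N, n) := fun i => embmx N n (off + i * n).
Arguments embfam : clear implicits.

Lemma embmx_isometry N n off : (off + n <= N)%N ->
  adjmx (embmx N n off) *m embmx N n off = 1%:M.
Proof.
move=> hN; apply/matrixP=> x y; rewrite !mxE.
have hx : (off + x < N)%N by rewrite (leq_trans _ hN) // ltn_add2l.
rewrite (bigD1 (Ordinal hx)) //= big1 ?addr0.
  by rewrite !mxE /= eqxx conjc_nat eqn_add2l mul1r.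
move=> r hr; rewrite !mxE; case: eqP => e; last by rewrite conjc0 mul0r.
by case/eqP: hr; apply: val_inj.
Qed.

Lemma embmx_orth N n n' off off' : (off + n <= off')%N || (off' + n' <= off)%N ->
  adjmx (embmx N n off) *m embmx N n' off' = 0.
Proof.
move=> disj; apply/matrixP=> x y; rewrite !mxE big1 // => r _; rewrite !mxE.
case: eqP => [rx|_]; last by rewrite conjc0 mul0r.
case: eqP => [ry|_]; last by rewrite mulr0.
by move: disj (ltn_ord x) (ltn_ord y); lia.
Qed.

Lemma isometry_family_embfam N n off u : (off + u * n <= N)%N ->
  isometry_family (embfam N n off u).
Proof.
move=> hN a b; case: eqP => [<-|/eqP ab].
  by apply: embmx_isometry; apply: leq_trans hN; have := ltn_ord a; nia.
by apply: embmx_orth; move: ab; rewrite -val_eqE /=; have := ltn_ord a; have := ltn_ord b; nia.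
Qed.

Lemma orthogonal_embfam N n n' off u off' v : (off + u * n <= off')%N ->
  orthogonal_families (embfam N n off u) (embfam N n' off' v).
Proof. by move=> h a b; apply: embmx_orth; have := ltn_ord a; nia. Qed.

Lemma embmx_range N n off (r r' : 'I_N) :
  (embmx N n off *m adjmx (embmx N n off)) r r' = ((r == r') && (off <= r < off + n)%N)%:R.
Proof.
rewrite mxE; case: (boolP (off <= r < off + n)%N) => [/andP[lo hi]|out].
  have hx : (r - off < n)%N by rewrite ltn_subLR.
  rewrite (bigD1 (Ordinal hx)) //= big1 ?addr0.
    by rewrite !mxE /= subnKC // eqxx conjc_nat mul1r andbT eq_sym.
  move=> x xr; rewrite !mxE; case: eqP => e; last by rewrite mul0r.
  by case/eqP: xr; apply: val_inj; rewrite /= e addKn.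
rewrite andbF big1 // => x _; rewrite !mxE; case: eqP => e; last by rewrite mul0r.
by case/negP: out; rewrite e leq_addr ltn_add2l ltn_ord.
Qed.

Lemma AdSum_embfam1 N n off u (r r' : 'I_N) :
  AdSum (embfam N n off u) 1%:M r r' = ((r == r') && (off <= r < off + u * n)%N)%:R.
Proof.
rewrite summxE; elim: u => [|u IH].
  by rewrite big_ord0 mul0n addn0 ltnNge andbN andbF.
rewrite big_ord_recr /= Ad1 embmx_range; rewrite /embfam /= in IH *; rewrite IH.
case: (r == r') => /=; last by rewrite addr0.
rewrite mulSnr addnA; case: (leqP off r) => lo /=; last first.
  by rewrite add0r (leqNgt (off + u * n)) (leq_trans lo) ?leq_addr.
case: (ltnP r (off + u * n)) => hi /=; last by rewrite add0r.
by rewrite (ltn_addr _ hi) addr0.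
Qed.

Lemma AdSum_embfam_partition N m n u v : N = (u * m + v * n)%N ->
  AdSum (embfam N m 0 u) 1%:M + AdSum (embfam N n (u * m) v) 1%:M = 1%:M.
Proof.
move=> hN; apply/matrixP => r r'; rewrite !mxE !AdSum_embfam1.
case: (r == r') => /=; last by rewrite addr0.
have := ltn_ord r; rewrite {2}hN add0n => rN.
by case: (ltnP r (u * m)) => hr /=; rewrite ?addr0 // add0r rN.
Qed.

End Isometries.

Arguments embfam {R} N n off u.

Section Continuity.
Variable R : realType.
Local Notation C := R[i].

(* [C] gets its norm topology only through its [numFieldType] structure. *)
Definition ccontinuous (g : R -> C) := continuous (g : R -> (C : numFieldType)).

Lemma eq_ccontinuous g h : g =1 h -> ccontinuous g -> ccontinuous h.
Proof. by move=> /funext ->. Qed.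

Lemma ccontinuous_cst c : ccontinuous (fun _ => c).
Proof. by move=> x; apply: cst_continuous. Qed.

Lemma ccontinuousD g h : ccontinuous g -> ccontinuous h -> ccontinuous (fun t => g t + h t).
Proof. by move=> cg ch x; apply: continuousD; [exact: cg | exact: ch]. Qed.

Lemma ccontinuousM g h : ccontinuous g -> ccontinuous h -> ccontinuous (fun t => g t * h t).
Proof. by move=> cg ch x; apply: continuousM; [exact: cg | exact: ch]. Qed.

Lemma ccontinuousZl c g : ccontinuous g -> ccontinuous (fun t => c * g t).
Proof. exact/ccontinuousM/ccontinuous_cst. Qed.

Lemma ccontinuous_conj g : ccontinuous g -> ccontinuous (fun t => conjc (g t)).
Proof.
move=> cg x; apply/cvgrPdist_lt => e e0.
have /cvgrPdist_lt/(_ e e0) := cg x.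
by apply: filterS => t; rewrite -rmorphB normcJ.
Qed.

Lemma ccontinuous_real (r : R -> R) : continuous r -> ccontinuous (fun t => (r t)%:C%C).
Proof.
move=> cr x; apply/cvgrPdist_lt => e e0.
have Ime : complex.Im e = 0 by apply: ger0_Im; apply: ltW.
have Ree : 0 < complex.Re e by move: e0; rewrite ltcE /= => /andP[].
have /cvgrPdist_lt/(_ _ Ree) := cr x; apply: filterS => t ht.
rewrite -rmorphB normc_def /= expr0n /= addr0 sqrtr_sqr.
by rewrite [X in _ < X]complexE Ime mulr0 addr0 ltcE /= eqxx.
Qed.

Lemma ccontinuous_comp g (h : R -> R) :
  ccontinuous g -> continuous h -> ccontinuous (fun t => g (h t)).
Proof. by move=> cg ch x; apply: continuous_comp; [apply: ch | apply: cg]. Qed.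

Lemma ccontinuous_sum (I : Type) (s : seq I) (g : I -> R -> C) :
  (forall k, ccontinuous (g k)) -> ccontinuous (fun t => \sum_(k <- s) g k t).
Proof.
move=> cg; elim: s => [|k s IH].
  apply: (@eq_ccontinuous (fun _ => 0)); last exact: ccontinuous_cst.
  by move=> t; rewrite big_nil.
apply: (@eq_ccontinuous (fun t => g k t + \sum_(j <- s) g j t)).
  by move=> t; rewrite big_cons.
exact: (ccontinuousD (cg k) IH).
Qed.

Definition mx_ccontinuous m n (F : R -> 'M[C]_(m, n)) := forall i j, ccontinuous (fun t => F t i j).

Lemma mx_continuousP n (F : R -> 'M[C]_n) : mx_continuous F <-> mx_ccontinuous F.
Proof.
split=> cF i j.
  have [cRe cIm] := cF i j.
  apply: (@eq_ccontinuous (fun t => 'Re (F t i j) + 'i * 'Im (F t i j))).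
    by move=> t; rewrite -Crect.
  by apply: ccontinuousD; [exact: cRe | apply: ccontinuousZl; exact: cIm].
have cFc := ccontinuous_conj (cF i j).
split.
  apply: (@eq_ccontinuous (fun t => 2^-1 * (F t i j + conjc (F t i j)))).
    by move=> t; rewrite ReE mulrC.
  by apply: ccontinuousZl; apply: ccontinuousD; [exact: cF | exact: cFc].
apply: (@eq_ccontinuous (fun t => ('i / 2) * (conjc (F t i j) + (-1) * F t i j))).
  by move=> t; rewrite ImE mulN1r mulrAC.
by apply: ccontinuousZl; apply: ccontinuousD; [exact: cFc | apply: ccontinuousZl; exact: cF].
Qed.

Lemma mx_ccontinuous_cst m n (A : 'M[C]_(m, n)) : mx_ccontinuous (fun _ => A).
Proof. by move=> i j; apply: ccontinuous_cst. Qed.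

Lemma mx_ccontinuousD m n (F G : R -> 'M[C]_(m, n)) :
  mx_ccontinuous F -> mx_ccontinuous G -> mx_ccontinuous (fun t => F t + G t).
Proof.
move=> cF cG i j; apply: (eq_ccontinuous (g := fun t => F t i j + G t i j)).
  by move=> t; rewrite [RHS]mxE.
exact: ccontinuousD.
Qed.

Lemma mx_ccontinuousZ m n (g : R -> C) (A : 'M[C]_(m, n)) :
  ccontinuous g -> mx_ccontinuous (fun t => g t *: A).
Proof.
move=> cg i j; apply: (eq_ccontinuous (g := fun t => A i j * g t)).
  by move=> t; rewrite [RHS]mxE mulrC.
exact: ccontinuousZl.
Qed.

Lemma mx_ccontinuousM m n k (F : R -> 'M[C]_(m, n)) (G : R -> 'M[C]_(n, k)) :
  mx_ccontinuous F -> mx_ccontinuous G -> mx_ccontinuous (fun t => F t *m G t).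
Proof.
move=> cF cG i j; apply: (eq_ccontinuous (g := fun t => \sum_l F t i l * G t l j)).
  by move=> t; rewrite [RHS]mxE.
by apply: ccontinuous_sum => l; apply: ccontinuousM.
Qed.

Lemma mx_ccontinuous_adj m n (F : R -> 'M[C]_(m, n)) :
  mx_ccontinuous F -> mx_ccontinuous (fun t => adjmx (F t)).
Proof.
move=> cF i j; apply: (eq_ccontinuous (g := fun t => conjc (F t j i))).
  by move=> t; rewrite adjmxE.
exact: ccontinuous_conj.
Qed.

Lemma mx_ccontinuous_comp m n (F : R -> 'M[C]_(m, n)) h :
  mx_ccontinuous F -> continuous h -> mx_ccontinuous (fun t => F (h t)).
Proof. by move=> cF ch i j; apply: (ccontinuous_comp (cF i j) ch). Qed.

Lemma mx_ccontinuous_sum m n (K : finType) (F : K -> R -> 'M[C]_(m, n)) :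
  (forall k, mx_ccontinuous (F k)) -> mx_ccontinuous (fun t => \sum_k F k t).
Proof.
move=> cF i j; apply: (eq_ccontinuous (g := fun t => \sum_k F k t i j)).
  by move=> t; rewrite summxE.
by apply: ccontinuous_sum => k; apply: cF.
Qed.

Lemma mx_ccontinuous_Ad N n (E : R -> 'M[C]_(N, n)) F :
  mx_ccontinuous E -> mx_ccontinuous F -> mx_ccontinuous (fun t => Ad (E t) (F t)).
Proof.
move=> cE cF; rewrite /Ad.
by apply: mx_ccontinuousM; [apply: mx_ccontinuousM | apply: mx_ccontinuous_adj].
Qed.

Lemma mx_ccontinuous_AdSum N n (K : finType) (E : K -> 'M[C]_(N, n)) F :
  mx_ccontinuous F -> mx_ccontinuous (fun t => AdSum E (F t)).
Proof.
move=> cF; apply: mx_ccontinuous_sum => k.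
by apply: mx_ccontinuous_Ad => //; apply: mx_ccontinuous_cst.
Qed.

End Continuity.

Section SwapPath.
Variable R : realType.
Local Notation C := R[i].

(* [(exp (i pi t) - 1) / 2], so that [1 + 2 * swap_coef t] stays on the unit circle. *)
Definition swap_coef (t : R) : C := Complex ((cos (pi * t) - 1) / 2) (sin (pi * t) / 2).

Lemma swap_coef_circle t :
  swap_coef t + conjc (swap_coef t) + 2 * (swap_coef t * conjc (swap_coef t)) = 0.
Proof.
have := cos2Dsin2 (pi * t); rewrite /swap_coef /=.
set c := cos _; set s := sin _ => cs.
simpc; apply/eqP; rewrite eq_complex /=; apply/andP; split; apply/eqP; [nra | ring].
Qed.

Lemma swap_coef0 : swap_coef 0 = 0.
Proof. by rewrite /swap_coef mulr0 cos0 sin0 subrr !mul0r. Qed.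

Lemma swap_coef1 : swap_coef 1 = -1.
Proof.
rewrite /swap_coef mulr1 cospi sinpi mul0r.
by apply/eqP; rewrite eq_complex /= oppr0 eqxx andbT; apply/eqP; field.
Qed.

Lemma swap_coef_continuous : ccontinuous swap_coef.
Proof.
have cpi : continuous (fun t : R => pi * t) by move=> x; exact: mulrl_continuous.
have ccos : continuous (fun t : R => cos (pi * t)).
  by move=> x; apply: continuous_comp; [exact: cpi | exact: continuous_cos].
have csin : continuous (fun t : R => sin (pi * t)).
  by move=> x; apply: continuous_comp; [exact: cpi | exact: continuous_sin].
apply: (eq_ccontinuous
  (g := fun t => ((cos (pi * t) - 1) / 2)%:C%C + 'i%C * (sin (pi * t) / 2)%:C%C)).
  by move=> t; apply/eqP; rewrite eq_complex /=; apply/andP; split; apply/eqP; ring.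
apply: ccontinuousD; last apply: ccontinuousZl; apply: ccontinuous_real => x.
  apply: (continuousM (s := fun t => cos (pi * t) - 1)); last exact: cst_continuous.
  by apply: (continuousB (f := fun t => cos (pi * t))); [exact: ccos | exact: cst_continuous].
by apply: (continuousM (s := fun t => sin (pi * t))); [exact: csin | exact: cst_continuous].
Qed.

(* [Q = 1 - S] for the self-adjoint unitary flip [S], so [Q^2 = 2 Q] and
   [1 + h Q] is unitary exactly when [|1 + 2 h| = 1]. *)
Definition swap_path n (t : R) : 'M[C]_(n * n) :=
  1%:M + swap_coef t *: (1%:M - tswap n n).

Lemma mulmx_reflection_path n (Q : 'M[C]_n) (h h' : C) :
  Q *m Q = 2 *: Q -> h + h' + 2 * (h * h') = 0 ->
  (1%:M + h *: Q) *m (1%:M + h' *: Q) = 1%:M.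
Proof.
move=> QQ hh'; rewrite mulmxDl !mulmxDr !mul1mx mulmx1 -scalemxAl -scalemxAr QQ.
rewrite !scalerA -addrA -!scalerDl.
have -> : h' + (h + h * h' * 2) = 0 by rewrite -hh'; ring.
by rewrite scale0r addr0.
Qed.

Lemma swap_path_adj n t :
  adjmx (swap_path n t) = 1%:M + conjc (swap_coef t) *: (1%:M - tswap n n).
Proof. by rewrite /swap_path adjmxD adjmx1 adjmxZ adjmxD adjmxN adjmx1 adjmx_tswap. Qed.

Lemma swap_reflection_sq n :
  (1%:M - tswap n n) *m (1%:M - tswap n n) = 2 *: (1%:M - tswap n n) :> 'M[C]_(n * n).
Proof.
rewrite mulmxBl !mulmxBr !mul1mx mulmx1 tswapK scaler_nat mulr2n opprB.
by rewrite [in LHS]addrC.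
Qed.

Lemma swap_path_unitary n t :
  swap_path n t *m adjmx (swap_path n t) = 1%:M /\ adjmx (swap_path n t) *m swap_path n t = 1%:M.
Proof.
rewrite swap_path_adj; split; apply: mulmx_reflection_path (swap_reflection_sq n) _.
  exact: swap_coef_circle.
by rewrite (addrC (conjc _)) (mulrC (conjc _)); exact: swap_coef_circle.
Qed.

Lemma swap_path0 n : swap_path n 0 = 1%:M.
Proof. by rewrite /swap_path swap_coef0 scale0r addr0. Qed.

Lemma swap_path1 n : swap_path n 1 = tswap n n.
Proof. by rewrite /swap_path swap_coef1 scaleN1r opprB addrC subrK. Qed.

Lemma swap_path_continuous n : mx_ccontinuous (swap_path n).
Proof.
apply: mx_ccontinuousD; first exact: mx_ccontinuous_cst.
exact: mx_ccontinuousZ swap_coef_continuous.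
Qed.

Definition tens_rot n (X : 'M[C]_n) (t : R) : 'M[C]_(n * n) := Ad (swap_path n t) (X *t 1%:M).

Lemma tens_rotD n (X Y : 'M[C]_n) t : tens_rot (X + Y) t = tens_rot X t + tens_rot Y t.
Proof. by rewrite /tens_rot tensmxDl AdD. Qed.

Lemma tens_rotZ n c (X : 'M[C]_n) t : tens_rot (c *: X) t = c *: tens_rot X t.
Proof. by rewrite /tens_rot tensmxZl AdZ. Qed.

Lemma tens_rot_adj n (X : 'M[C]_n) t : adjmx (tens_rot X t) = tens_rot (adjmx X) t.
Proof. by rewrite /tens_rot Ad_adj adjmx_tens adjmx1. Qed.

Lemma tens_rotM n (X Y : 'M[C]_n) t : tens_rot X t *m tens_rot Y t = tens_rot (X *m Y) t.
Proof. by rewrite /tens_rot AdM ?tensmx_mul ?mulmx1 //; case: (swap_path_unitary n t). Qed.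

Lemma tens_rot1 n t : tens_rot (1%:M : 'M[C]_n) t = 1%:M.
Proof. by rewrite /tens_rot tensmx11 Ad1; case: (swap_path_unitary n t). Qed.

Lemma tens_rot_at0 n (X : 'M[C]_n) : tens_rot X 0 = X *t 1%:M.
Proof. by rewrite /tens_rot swap_path0 /Ad adjmx1 mul1mx mulmx1. Qed.

Lemma tens_rot_at1 n (X : 'M[C]_n) : tens_rot X 1 = 1%:M *t X.
Proof. by rewrite /tens_rot swap_path1 Ad_tswap. Qed.

Lemma tens_rot_continuous n (X : 'M[C]_n) : mx_ccontinuous (tens_rot X).
Proof. by apply: mx_ccontinuous_Ad; [exact: swap_path_continuous | exact: mx_ccontinuous_cst]. Qed.

End SwapPath.

Arguments tens_rot {R n} X t.

Section Clamp.
Variable R : realType.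

Lemma clamp01_continuous : continuous (@clamp01 R).
Proof.
move=> x; apply: (continuous_min (f := fun _ => 1)); first exact: cst_continuous.
by apply: (continuous_max (f := fun _ => 0)); [exact: cst_continuous | exact: cvg_id].
Qed.

Lemma clamp01_idem (t : R) : clamp01 (clamp01 t) = clamp01 t.
Proof.
rewrite /clamp01; set c := Num.min 1 (Num.max 0 t).
have c_ge0 : 0 <= c by rewrite /c le_min ler01 le_max lexx.
have c_le1 : c <= 1 by rewrite /c ge_min lexx.
by rewrite (max_r c_ge0) (min_r c_le1).
Qed.

Lemma clamp01_0 : clamp01 (0 : R) = 0.
Proof. by rewrite /clamp01 maxxx (min_r ler01). Qed.

Lemma clamp01_1 : clamp01 (1 : R) = 1.
Proof. by rewrite /clamp01 (max_r ler01) minxx. Qed.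

End Clamp.

(* By the Chinese remainder theorem take [x < p q] with [x = N mod p] and [q | x];
   then [N - x >= p q] is a positive multiple of [p]. *)
Lemma coprime_decomposition p q N : (0 < p)%N -> (0 < q)%N -> coprime p q ->
  (2 * p * q <= N)%N -> exists u v, (0 < u)%N /\ N = (u * p + v * q)%N.
Proof.
move=> p_gt0 q_gt0 copq leN.
set x := (chinese p q N 0 %% (p * q))%N.
have x_lt : (x < p * q)%N by rewrite ltn_pmod // muln_gt0 p_gt0.
have x_modp : x = N %[mod p].
  by rewrite /x (@modn_dvdm (p * q)) ?dvdn_mulr // chinese_modl.
have q_dvd_x : (q %| x)%N.
  by rewrite /dvdn /x (@modn_dvdm (p * q)) ?dvdn_mull // chinese_modr // mod0n.
have x_le : (x <= N)%N by move: leN; nia.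
have p_dvd : (p %| N - x)%N by rewrite -eqn_mod_dvd // x_modp.
exists ((N - x) %/ p)%N, (x %/ q)%N; split; last by rewrite !divnK // subnK.
by rewrite divn_gt0 //; move: leN x_lt; nia.
Qed.

Section DimensionDropEmbedding.
Variables (R : realType) (p q P0 P1 u v w z : nat).
Hypotheses (p_gt0 : (0 < p)%N) (q_gt0 : (0 < q)%N) (u_gt0 : (0 < u)%N) (w_gt0 : (0 < w)%N).
Hypotheses (P0E : P0 = (u * p + v * q)%N) (P1E : P1 = (w * q + z * p)%N).
Local Notation C := R[i].
Local Notation fun_mx := (R -> 'M[C]_(p * q)).

Definition end0 (f : fun_mx) : 'M[C]_p :=
  \matrix_(i, k) f 0 (mxtens_index (i, Ordinal q_gt0)) (mxtens_index (k, Ordinal q_gt0)).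

Definition end1 (f : fun_mx) : 'M[C]_q :=
  \matrix_(j, l) f 1 (mxtens_index (Ordinal p_gt0, j)) (mxtens_index (Ordinal p_gt0, l)).

Lemma end0E f X : f 0 = X *t 1%:M -> end0 f = X.
Proof. by move=> f0; apply/matrixP=> i k; rewrite mxE f0 tensmxE mxE eqxx mulr1. Qed.

Lemma end1E f Y : f 1 = 1%:M *t Y -> end1 f = Y.
Proof. by move=> f1; apply/matrixP=> j l; rewrite mxE f1 tensmxE mxE eqxx mul1r. Qed.

Lemma dimdrop_at0 f : dimdrop p q f -> f 0 = end0 f *t 1%:M.
Proof. by case=> _ [_ [[X f0] _]]; rewrite (end0E f0). Qed.

Lemma dimdrop_at1 f : dimdrop p q f -> f 1 = 1%:M *t end1 f.
Proof. by case=> _ [_ [_ [Y f1]]]; rewrite (end1E f1). Qed.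

Section EndpointAlgebra.
Variables (f g : fun_mx) (df : dimdrop p q f) (dg : dimdrop p q g).

Lemma end0D : end0 (fun t => f t + g t) = end0 f + end0 g.
Proof. by apply: end0E; rewrite (dimdrop_at0 df) (dimdrop_at0 dg) tensmxDl. Qed.

Lemma end1D : end1 (fun t => f t + g t) = end1 f + end1 g.
Proof. by apply: end1E; rewrite (dimdrop_at1 df) (dimdrop_at1 dg) tensmxDr. Qed.

Lemma end0Z c : end0 (fun t => c *: f t) = c *: end0 f.
Proof. by apply: end0E; rewrite (dimdrop_at0 df) tensmxZl. Qed.

Lemma end1Z c : end1 (fun t => c *: f t) = c *: end1 f.
Proof.
apply: end1E; rewrite (dimdrop_at1 df); apply/matrixP=> i j.
by rewrite !mxE mulrCA.
Qed.

Lemma end0_adj : end0 (adjf f) = adjmx (end0 f).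
Proof. by apply: end0E; rewrite adjfE (dimdrop_at0 df) adjmx_tens adjmx1. Qed.

Lemma end1_adj : end1 (adjf f) = adjmx (end1 f).
Proof. by apply: end1E; rewrite adjfE (dimdrop_at1 df) adjmx_tens adjmx1. Qed.

Lemma end0M : end0 (fun t => f t *m g t) = end0 f *m end0 g.
Proof. by apply: end0E; rewrite (dimdrop_at0 df) (dimdrop_at0 dg) tensmx_mul mulmx1. Qed.

Lemma end1M : end1 (fun t => f t *m g t) = end1 f *m end1 g.
Proof. by apply: end1E; rewrite (dimdrop_at1 df) (dimdrop_at1 dg) tensmx_mul mulmx1. Qed.

End EndpointAlgebra.

Lemma end0_unit : end0 (fun _ => 1%:M) = 1%:M.
Proof. by apply: end0E; rewrite tensmx11. Qed.

Lemma end1_unit : end1 (fun _ => 1%:M) = 1%:M.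
Proof. by apply: end1E; rewrite tensmx11. Qed.

(* C^P0 is u copies of C^p followed by v copies of C^q, C^P1 is w copies of C^q
   followed by z copies of C^p. *)
Let A0 : 'I_u -> 'M[C]_(P0, p) := embfam P0 p 0 u.
Let B0 : 'I_v -> 'M[C]_(P0, q) := embfam P0 q (u * p) v.
Let B1 : 'I_w -> 'M[C]_(P1, q) := embfam P1 q 0 w.
Let A1 : 'I_z -> 'M[C]_(P1, p) := embfam P1 p (w * q) z.

Let isoA0 : isometry_family A0.
Proof. by apply: isometry_family_embfam; rewrite P0E leq_addr. Qed.
Let isoB0 : isometry_family B0.
Proof. by apply: isometry_family_embfam; rewrite P0E. Qed.
Let isoB1 : isometry_family B1.
Proof. by apply: isometry_family_embfam; rewrite P1E leq_addr. Qed.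
Let isoA1 : isometry_family A1.
Proof. by apply: isometry_family_embfam; rewrite P1E. Qed.

Let orthA0B0 : orthogonal_families A0 B0. Proof. exact: orthogonal_embfam. Qed.
Let orthB1A1 : orthogonal_families B1 A1. Proof. exact: orthogonal_embfam. Qed.
Let orthB0A0 : orthogonal_families B0 A0. Proof. exact: orthogonal_familiesC. Qed.
Let orthA1B1 : orthogonal_families A1 B1. Proof. exact: orthogonal_familiesC. Qed.

Let Epq := tensfam A0 B1.
Let Eqp := tensfam B0 A1.
Let Epp := tensfam A0 A1.
Let Eqq := tensfam B0 B1.

Definition Phi_term (f : fun_mx) (s : R) (i : 'I_4) : 'M[C]_(P0 * P1) :=
  match val i with
  | 0 => AdSum Epq (f s)
  | 1 => AdSum Eqp (Ad (tswap p q) (f (1 - s)))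
  | 2 => AdSum Epp (tens_rot (end0 f) s)
  | _ => AdSum Eqq (tens_rot (end1 f) s)
  end.

Definition Phi f s := \sum_(i < 4) Phi_term f s i.

Lemma Phi_termD f g s i : dimdrop p q f -> dimdrop p q g ->
  Phi_term (fun t => f t + g t) s i = Phi_term f s i + Phi_term g s i.
Proof.
move=> df dg; case: i => [[|[|[|i]]] hi]; rewrite /Phi_term /=.
- by rewrite AdSumD.
- by rewrite AdD AdSumD.
- by rewrite (end0D df dg) tens_rotD AdSumD.
- by rewrite (end1D df dg) tens_rotD AdSumD.
Qed.

Lemma Phi_termZ f c s i : dimdrop p q f ->
  Phi_term (fun t => c *: f t) s i = c *: Phi_term f s i.
Proof.
move=> df; case: i => [[|[|[|i]]] hi]; rewrite /Phi_term /=.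
- by rewrite AdSumZ.
- by rewrite AdZ AdSumZ.
- by rewrite (end0Z df) tens_rotZ AdSumZ.
- by rewrite (end1Z df) tens_rotZ AdSumZ.
Qed.

Lemma Phi_term_adj f s i : dimdrop p q f -> Phi_term (adjf f) s i = adjmx (Phi_term f s i).
Proof.
move=> df; case: i => [[|[|[|i]]] hi]; rewrite /Phi_term /=.
- by rewrite adjfE AdSum_adj.
- by rewrite adjfE AdSum_adj Ad_adj.
- by rewrite AdSum_adj tens_rot_adj (end0_adj df).
- by rewrite AdSum_adj tens_rot_adj (end1_adj df).
Qed.

Lemma Phi_termM f g s i : dimdrop p q f -> dimdrop p q g ->
  Phi_term (fun t => f t *m g t) s i = Phi_term f s i *m Phi_term g s i.
Proof.
have tswap_iso : adjmx (tswap p q : 'M[C]_(q * p, p * q)) *m tswap p q = 1%:M.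
  by rewrite adjmx_tswap tswapK.
move=> df dg; case: i => [[|[|[|i]]] hi]; rewrite /Phi_term /=.
- by rewrite AdSumM //; apply: isometry_family_tens.
- by rewrite AdSumM ?AdM //; apply: isometry_family_tens.
- by rewrite AdSumM ?tens_rotM ?(end0M df dg) //; apply: isometry_family_tens.
- by rewrite AdSumM ?tens_rotM ?(end1M df dg) //; apply: isometry_family_tens.
Qed.

Lemma Phi_term_orth f g s i j : i != j -> Phi_term f s i *m Phi_term g s j = 0.
Proof.
case: i j => [[|[|[|[|//]]]] hi] [[|[|[|[|//]]]] hj] //= _; rewrite /Phi_term /=.
all: by apply: AdSum_orthM; apply: orthogonal_families_tens; first [by left | by right].
Qed.

Lemma PhiD f g s : dimdrop p q f -> dimdrop p q g ->
  Phi (fun t => f t + g t) s = Phi f s + Phi g s.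
Proof. by move=> df dg; rewrite /Phi -big_split; apply: eq_bigr => i _; apply: Phi_termD. Qed.

Lemma PhiZ c f s : dimdrop p q f -> Phi (fun t => c *: f t) s = c *: Phi f s.
Proof. by move=> df; rewrite /Phi scaler_sumr; apply: eq_bigr => i _; apply: Phi_termZ. Qed.

Lemma Phi_adj f s : dimdrop p q f -> Phi (adjf f) s = adjmx (Phi f s).
Proof. by move=> df; rewrite /Phi adjmx_sum; apply: eq_bigr => i _; apply: Phi_term_adj. Qed.

Lemma PhiM f g s : dimdrop p q f -> dimdrop p q g ->
  Phi (fun t => f t *m g t) s = Phi f s *m Phi g s.
Proof.
move=> df dg; rewrite /Phi mulmx_sum_orth => [|i j]; last exact: Phi_term_orth.
by apply: eq_bigr => i _; apply: Phi_termM.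
Qed.

Lemma Phi1 s : Phi (fun _ => 1%:M) s = 1%:M.
Proof.
rewrite /Phi !big_ord_recl big_ord0 addr0 /Phi_term /=.
rewrite end0_unit end1_unit !tens_rot1 Ad1 adjmx_tswap tswapK.
rewrite -(tensmx11 C p q) -(tensmx11 C q p) -(tensmx11 C p p) -(tensmx11 C q q).
rewrite !AdSum_tens -tensmxDD (AdSum_embfam_partition R P0E) (AdSum_embfam_partition R P1E).
exact: tensmx11.
Qed.

Lemma Phi_at0 f : dimdrop p q f ->
  Phi f 0 = (AdSum A0 (end0 f) + AdSum B0 (end1 f)) *t 1%:M.
Proof.
move=> df; rewrite /Phi !big_ord_recl big_ord0 addr0 /Phi_term /= subr0.
rewrite (dimdrop_at0 df) (dimdrop_at1 df) Ad_tswap !tens_rot_at0 !AdSum_tens.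
by rewrite -tensmxDD (AdSum_embfam_partition R P1E).
Qed.

Lemma Phi_at1 f : dimdrop p q f ->
  Phi f 1 = 1%:M *t (AdSum B1 (end1 f) + AdSum A1 (end0 f)).
Proof.
move=> df; rewrite /Phi !big_ord_recl big_ord0 addr0 /Phi_term /= subrr.
rewrite (dimdrop_at0 df) (dimdrop_at1 df) Ad_tswap !tens_rot_at1 !AdSum_tens.
by rewrite -tensmxDD (AdSum_embfam_partition R P0E).
Qed.

Lemma Phi_compress f s :
  adjmx (Epq (Ordinal u_gt0, Ordinal w_gt0)) *m Phi f s
    *m Epq (Ordinal u_gt0, Ordinal w_gt0) = f s.
Proof.
rewrite /Phi mulmx_sumr mulmx_suml (bigD1 ord0) //= big1 ?addr0.
  by rewrite /Phi_term /= AdSum_compress //; apply: isometry_family_tens.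
move=> [[|[|[|[|//]]]] hi] //= _; rewrite /Phi_term /=.
all: by apply: AdSum_compress_orth; apply: orthogonal_families_tens; first [by left | by right].
Qed.

Lemma Phi_continuous f : mx_ccontinuous f -> mx_ccontinuous (Phi f).
Proof.
move=> cf; apply: (mx_ccontinuous_sum (F := fun i t => Phi_term f t i)).
move=> [[|[|[|[|//]]]] hi]; rewrite /Phi_term /=; apply: mx_ccontinuous_AdSum.
- exact: cf.
- apply: mx_ccontinuous_Ad; first exact: mx_ccontinuous_cst.
  apply: mx_ccontinuous_comp cf _ => x.
  by apply: continuousB; [exact: cst_continuous | exact: cvg_id].
- exact: tens_rot_continuous.
- exact: tens_rot_continuous.
Qed.

Lemma dimdrop_embedding : unital_inj_star_hom (fun f t => Phi f (clamp01 t)).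
Proof.
split.
  move=> f df; split; first by move=> t; rewrite clamp01_idem.
  split.
    apply/mx_continuousP/mx_ccontinuous_comp; last exact: clamp01_continuous.
    by apply: Phi_continuous; apply/mx_continuousP; case: df => _ [].
  by split; [eexists; rewrite clamp01_0 (Phi_at0 df) | eexists; rewrite clamp01_1 (Phi_at1 df)].
split; first by move=> f g df dg; apply: funext => t; rewrite PhiD.
split; first by move=> c f df; apply: funext => t; rewrite PhiZ.
split; first by move=> f g df dg; apply: funext => t; rewrite PhiM.
split; first by move=> f df; apply: funext => t; rewrite Phi_adj.
split; first by apply: funext => t; rewrite Phi1.
move=> f g [fE _] [gE _] Phifg; apply: funext => t.
by rewrite fE gE -(Phi_compress f) -(Phi_compress g) (congr1 (fun h => h t) Phifg).
Qed.

End DimensionDropEmbedding.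

Theorem lemma4p2 (R : realType) (p q P0 P1 : nat) :
  (0 < p)%N -> (0 < q)%N -> coprime p q ->
  (0 < P0)%N -> (0 < P1)%N -> coprime P0 P1 ->
  (2 * p * q <= minn P0 P1)%N ->
  exists phi : (R -> 'M[R[i]]_(p * q)) -> (R -> 'M[R[i]]_(P0 * P1)),
    unital_inj_star_hom phi.
Proof.
move=> p_gt0 q_gt0 copq _ _ _ le_min.
have le_P0 : (2 * p * q <= P0)%N by apply: leq_trans le_min (geq_minl _ _).
have le_P1 : (2 * q * p <= P1)%N by rewrite mulnAC; apply: leq_trans le_min (geq_minr _ _).
have copqp : coprime q p by rewrite coprime_sym.
have [u [v [u_gt0 P0E]]] := coprime_decomposition p_gt0 q_gt0 copq le_P0.
have [w [z [w_gt0 P1E]]] := coprime_decomposition q_gt0 p_gt0 copqp le_P1.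
by eexists; exact: (dimdrop_embedding R p_gt0 q_gt0 u_gt0 w_gt0 P0E P1E).
Qed.
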